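(* Let $N\ge1$ and let $\mathbf a\in\mathbb{R}^{N+1}$ have either all coordinates strictly positive or all coordinates strictly negative. Let $\mathcal C_{\mathbf a}$, $\oplus_{\mathcal C_{\mathbf a}}$ and $\mathbf e_{\mathbf a}=\mathcal C_{\mathbf a}(\mathbf 1)$ be as in the context. Then the logarithm map $\mathrm{Log}_{\mathcal C_{\mathbf a}}:\Delta_N^0\to T_{\mathbf e_{\mathbf a}}\Delta_N^0$ of the Lie group $(\Delta_N^0,\oplus_{\mathcal C_{\mathbf a}})$ is given, for $\boldsymbol\lambda\in\Delta_N^0$ and $i=1,\dots,N+1$, by $$\big(\mathrm{Log}_{\mathcal C_{\mathbf a}}(\boldsymbol\lambda)\big)_i=(\mathbf e_{\mathbf a})_i\left(\ln\lambda_i-\frac{a_i}{\sum_{k=1}^{N+1}a_k(\mathbf e_{\mathbf a})_k}\sum_{j=1}^{N+1}(\mathbf e_{\mathbf a})_j\ln\lambda_j\right).$$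
   Context: $\mathbb{R}^{N+1}_{>0}$ is the open positive orthant, an abelian Lie group under componentwise multiplication $\mathbf x\oplus\mathbf y=(x_1y_1,\dots,x_{N+1}y_{N+1})$ with neutral element $\mathbf 1=(1,\dots,1)$. $\Delta_N^0=\{\boldsymbol\lambda\in\mathbb{R}^{N+1}_{>0}\mid\sum_i\lambda_i=1\}$. For $\mathbf a$ with all coordinates of the same strict sign and $\mathbf x\in\mathbb{R}^{N+1}_{>0}$, let $t_{\mathbf a}(\mathbf x)$ be the unique real solution $t$ of $\sum_{i=1}^{N+1}x_ie^{a_it}=1$, and set $\mathcal C_{\mathbf a}(\mathbf x)=(x_1e^{a_1t_{\mathbf a}(\mathbf x)},\dots,x_{N+1}e^{a_{N+1}t_{\mathbf a}(\mathbf x)})\in\Delta_N^0$ (the unique point of $\Delta_N^0$ on the curve $\{(x_ie^{ta_i})_i\mid t\in\mathbb{R}\}$). The group operation on $\Delta_N^0$ is $\boldsymbol\lambda\oplus_{\mathcal C_{\mathbf a}}\boldsymbol\mu=\mathcal C_{\mathbf a}(\boldsymbol\lambda\oplus\boldsymbol\mu)$; this makes $\Delta_N^0$ an abelian Lie group (isomorphic to the quotient of $(\mathbb{R}^{N+1}_{>0},\oplus)$ by $H_{\mathbf a}=\{(e^{ta_i})_i\mid t\in\mathbb{R}\}$) with neutral element $\mathbf e_{\mathbf a}=\mathcal C_{\mathbf a}(\mathbf 1)$ and Lie algebra identified with $T_{\mathbf e_{\mathbf a}}\Delta_N^0=\{\boldsymbol\xi\in\mathbb{R}^{N+1}\mid\sum_i\xi_i=0\}$.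 Its Lie group exponential map $\mathrm{Exp}_{\mathcal C_{\mathbf a}}:T_{\mathbf e_{\mathbf a}}\Delta_N^0\to\Delta_N^0$ is a global diffeomorphism, and $\mathrm{Log}_{\mathcal C_{\mathbf a}}$ denotes its inverse. *)

(* concrete reals R, Coquelicot derivatives.
   Vectors of R^{N+1} are functions nat -> R, coordinate i (paper index i+1)
   for i = 0..N; values at i > N are irrelevant. *)
From Stdlib Require Import Reals ClassicalEpsilon.
From Coquelicot Require Import Coquelicot.
Open Scope R_scope.

Definition sumN (N : nat) (f : nat -> R) : R := sum_f_R0 f N.

Definition same_strict_sign (N : nat) (a : nat -> R) : Prop :=
  (forall i, (i <= N)%nat -> 0 < a i) \/ (forall i, (i <= N)%nat -> a i < 0).

Definition pos_orthant (N : nat) (x : nat -> R) : Prop :=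
  forall i, (i <= N)%nat -> 0 < x i.
Definition simplex0 (N : nat) (l : nat -> R) : Prop :=
  pos_orthant N l /\ sumN N l = 1.

Definition tangent0 (N : nat) (xi : nat -> R) : Prop := sumN N xi = 0.

Definition t_a (N : nat) (a x : nat -> R) : R :=
  epsilon (inhabits 0) (fun t => sumN N (fun i => x i * exp (a i * t)) = 1).

Definition C_a (N : nat) (a x : nat -> R) : nat -> R :=
  fun i => x i * exp (a i * t_a N a x).

Definition opC (N : nat) (a l m : nat -> R) : nat -> R :=
  C_a N a (fun i => l i * m i).
Definition e_a (N : nat) (a : nat -> R) : nat -> R := C_a N a (fun _ => 1).

Definition one_param_subgroup (N : nat) (a : nat -> R) (g : R -> nat -> R) : Prop :=
  (forall t, simplex0 N (g t)) /\
  (forall i, (i <= N)%nat -> g 0 i = e_a N a i) /\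
  (forall s t i, (i <= N)%nat -> g (s + t) i = opC N a (g s) (g t) i) /\
  (forall t i, (i <= N)%nat -> ex_derive (fun u => g u i) t).

Definition init_velocity (N : nat) (g : R -> nat -> R) (xi : nat -> R) : Prop :=
  forall i, (i <= N)%nat -> is_derive (fun u => g u i) 0 (xi i).

Definition Exp_is (N : nat) (a xi l : nat -> R) : Prop :=
  (exists g, one_param_subgroup N a g /\ init_velocity N g xi /\
             forall i, (i <= N)%nat -> g 1 i = l i) /\
  (forall g, one_param_subgroup N a g -> init_velocity N g xi ->
             forall i, (i <= N)%nat -> g 1 i = l i).

Definition Log_formula (N : nat) (a l : nat -> R) : nat -> R :=
  fun i => e_a N a i *
    (ln (l i) - a i / sumN N (fun k => a k * e_a N a k) *
                sumN N (fun j => e_a N a j * ln (l j))).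

From Stdlib Require Import Reals Lra Lia ClassicalEpsilon FunctionalExtensionality.
From Coquelicot Require Import Coquelicot.
Open Scope R_scope.

(** Write [A = sum_k a_k (e_a)_k] and
    [L(x)_m = ln x_m - a_m / A * sum_j (e_a)_j ln x_j], so that the claimed
    logarithm is [(e_a)_m L(l)_m].  The linear map [ln x |-> L(x)] vanishes on
    the direction [a] of the curves [C_a] projects along, hence [L] turns
    [opC] into addition and is injective on the simplex.  For a differentiable
    one-parameter subgroup [g], [t |-> L(g t)] is additive and differentiable,
    hence linear, and its slope is [xi_m / (e_a)_m] because the velocity [xi]
    has coordinate sum zero.  So [L(g 1) = xi / e_a], which pins down [g 1]
    (uniqueness) and identifies the velocity of [t |-> C_a(l^t)] (existence).
    The only analytic work is the differentiability of [t |-> t_a (l^t)],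
    obtained by implicit differentiation using Carathéodory slopes. *)

(** * Carathéodory slopes *)

Definition slope (f : R -> R) (x l y : R) : R :=
  if Req_EM_T y x then l else (f y - f x) / (y - x).

Lemma slope_at f x l : slope f x l x = l.
Proof. unfold slope; destruct (Req_EM_T x x); [reflexivity | contradiction]. Qed.

Lemma slope_spec f x l y : f y - f x = (y - x) * slope f x l y.
Proof.
  unfold slope; destruct (Req_EM_T y x) as [-> | Hyx]; [ring |].
  field; intro; apply Hyx; lra.
Qed.

Lemma slope_continuous f x l : is_derive f x l -> continuity_pt (slope f x l) x.
Proof.
  intros Hd eps Heps; apply is_derive_Reals in Hd.
  destruct (Hd eps Heps) as [d Hd'].
  exists d; split; [apply cond_pos |].
  intros y [[_ Hxy] Hy]; simpl in *; unfold R_dist in *.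
  rewrite slope_at; unfold slope.
  destruct (Req_EM_T y x) as [-> | _]; [contradiction |].
  replace y with (x + (y - x)) at 1 by ring.
  apply Hd'; [intro; apply Hxy; lra | exact Hy].
Qed.

Lemma is_derive_of_slope f x (phi : R -> R) :
  (forall y, f y - f x = (y - x) * phi y) -> continuity_pt phi x ->
  is_derive f x (phi x).
Proof.
  intros Hf Hphi; apply is_derive_Reals; intros eps Heps.
  destruct (Hphi eps Heps) as [d [Hd Hy]].
  exists (mkposreal d Hd); intros h Hh0 Hh.
  rewrite Hf; replace ((x + h - x) * phi (x + h) / h) with (phi (x + h)) by (field; exact Hh0).
  apply (Hy (x + h)); split.
  - split; [exact I | intro; apply Hh0; lra].
  - simpl; unfold R_dist; replace (x + h - x) with h by ring; exact Hh.
Qed.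

Lemma is_derive_increment_ratio (f n k : R -> R) x dn :
  (forall y, n y - n x = (f y - f x) * k y) -> (forall y, k y <> 0) ->
  is_derive n x dn -> continuity_pt k x -> is_derive f x (dn / k x).
Proof.
  intros Hnk Hk Hn Hkc.
  rewrite <- (slope_at n x dn).
  apply (is_derive_of_slope f x (fun y => slope n x dn y / k y)).
  - intros y; apply (Rmult_eq_reg_r (k y)); [| apply Hk].
    rewrite <- Hnk, (slope_spec n x dn y); field; apply Hk.
  - apply continuity_pt_div; [apply slope_continuous, Hn | exact Hkc | apply Hk].
Qed.

Lemma slope_exp_pos y : 0 < slope exp 0 1 y.
Proof.
  unfold slope; destruct (Req_EM_T y 0) as [_ | Hy]; [lra |].
  rewrite exp_0, Rminus_0_r.
  destruct (Rtotal_order y 0) as [Hlt | [Heq | Hgt]]; [| contradiction |].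
  - assert (Hexp : exp y < exp 0) by (apply exp_increasing; exact Hlt).
    rewrite exp_0 in Hexp.
    replace ((exp y - 1) / y) with ((1 - exp y) / - y) by (field; exact Hy).
    apply Rdiv_lt_0_compat; lra.
  - assert (Hexp : exp 0 < exp y) by (apply exp_increasing; exact Hgt).
    rewrite exp_0 in Hexp; apply Rdiv_lt_0_compat; lra.
Qed.

Lemma exp_sub_factor b s s0 :
  exp (b * s) - exp (b * s0) = b * (s - s0) * exp (b * s0) * slope exp 0 1 (b * (s - s0)).
Proof.
  assert (E := slope_spec exp 0 1 (b * (s - s0))); rewrite exp_0, Rminus_0_r in E.
  replace (b * s) with (b * s0 + b * (s - s0)) by ring; rewrite exp_plus.
  transitivity (exp (b * s0) * (exp (b * (s - s0)) - 1)); [ring | rewrite E; ring].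
Qed.

Lemma is_derive_continuity_pt (f : R -> R) x l : is_derive f x l -> continuity_pt f x.
Proof. intros H; apply continuity_pt_filterlim, (ex_derive_continuous f); exists l; exact H. Qed.

Lemma additive_derive_linear (phi : R -> R) d :
  (forall s t, phi (s + t) = phi s + phi t) -> is_derive phi 0 d ->
  forall t, phi t = d * t.
Proof.
  intros Hadd Hd t.
  assert (H0 : phi 0 = 0) by (specialize (Hadd 0 0); rewrite Rplus_0_l in Hadd; lra).
  assert (Hu : forall u, is_derive phi u d).
  { intros u; apply is_derive_Reals; apply is_derive_Reals in Hd.
    intros eps Heps; destruct (Hd eps Heps) as [del Hdel]; exists del.
    intros h Hh0 Hh; rewrite Hadd.
    replace (phi u + phi h - phi u) with (phi (0 + h) - phi 0) by (rewrite Rplus_0_l, H0; ring).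
    apply Hdel; assumption. }
  destruct (MVT_gen phi 0 t (fun _ => d)) as [c [_ Hc]].
  - intros x _; apply Hu.
  - intros x _; apply (is_derive_continuity_pt phi x d), Hu.
  - rewrite H0 in Hc; lra.
Qed.

Lemma sum_f_R0_lt (f g : nat -> R) N :
  (forall i, (i <= N)%nat -> f i < g i) -> sum_f_R0 f N < sum_f_R0 g N.
Proof.
  intros H.
  assert (Hpos : 0 < sum_f_R0 (fun i => g i - f i) N)
    by (apply tech1; intros i Hi; specialize (H i Hi); lra).
  rewrite minus_sum in Hpos; lra.
Qed.

Lemma is_derive_sum_f_R0 (f : nat -> R -> R) (df : nat -> R) N x :
  (forall k, (k <= N)%nat -> is_derive (f k) x (df k)) ->
  is_derive (fun y => sum_f_R0 (fun k => f k y) N) x (sum_f_R0 df N).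
Proof.
  intros H; rewrite <- sum_n_Reals.
  apply (is_derive_ext (fun y => sum_n (fun k => f k y) N)); [intros; apply sum_n_Reals |].
  exact (is_derive_sum_n (K := R_AbsRing) (V := R_NormedModule) f N x df H).
Qed.

Lemma continuity_pt_sum_f_R0 (f : nat -> R -> R) N x :
  (forall k, (k <= N)%nat -> continuity_pt (f k) x) ->
  continuity_pt (fun y => sum_f_R0 (fun k => f k y) N) x.
Proof.
  induction N as [| N IH]; intros H; simpl; [apply H; lia |].
  apply continuity_pt_plus; [apply IH; intros; apply H; lia | apply H; lia].
Qed.

Lemma sum_mul_same_sign_neq0 N (a c : nat -> R) :
  same_strict_sign N a -> (forall i, (i <= N)%nat -> 0 < c i) ->
  sumN N (fun i => a i * c i) <> 0.
Proof.
  intros [Ha | Ha] Hc; unfold sumN.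
  - apply Rgt_not_eq, tech1; intros i Hi; apply Rmult_lt_0_compat; auto.
  - apply Rlt_not_eq; rewrite <- (Rmult_0_l (INR (S N))), <- sum_cte.
    apply sum_f_R0_lt; intros i Hi; specialize (Ha i Hi); specialize (Hc i Hi); nra.
Qed.

(** * The sums [sum_i x_i exp (a_i s)] *)

Definition curve_sum N (a x : nat -> R) (s : R) : R :=
  sumN N (fun i => x i * exp (a i * s)).

Lemma is_derive_curve_sum N a x s :
  is_derive (curve_sum N a x) s (sumN N (fun i => x i * (a i * exp (a i * s)))).
Proof.
  apply (is_derive_sum_f_R0 (fun i s => x i * exp (a i * s))); intros i _.
  auto_derive; [exact I | ring].
Qed.

Lemma continuity_pt_curve_sum N a x s : continuity_pt (curve_sum N a x) s.
Proof. eapply is_derive_continuity_pt, is_derive_curve_sum. Qed.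

Lemma curve_sum_opp N a x s : curve_sum N (fun i => - a i) x s = curve_sum N a x (- s).
Proof. apply sum_eq; intros i _; do 2 f_equal; ring. Qed.

Lemma curve_sum_lt N a x s s' :
  (forall i, (i <= N)%nat -> 0 < a i) -> pos_orthant N x -> s < s' ->
  curve_sum N a x s < curve_sum N a x s'.
Proof.
  intros Ha Hx Hs; apply sum_f_R0_lt; intros i Hi.
  apply Rmult_lt_compat_l; [apply Hx, Hi |].
  apply exp_increasing, Rmult_lt_compat_l; [apply Ha, Hi | exact Hs].
Qed.

Lemma curve_sum_inj N a x s s' :
  same_strict_sign N a -> pos_orthant N x ->
  curve_sum N a x s = curve_sum N a x s' -> s = s'.
Proof.
  intros Hs Hx Heq.
  assert (Hlt : forall u u', u < u' -> curve_sum N a x u <> curve_sum N a x u').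
  { intros u u' Hu; destruct Hs as [Ha | Ha].
    - apply Rlt_not_eq, curve_sum_lt; assumption.
    - rewrite <- (Ropp_involutive u), <- (Ropp_involutive u').
      rewrite <- (curve_sum_opp N a x (- u)), <- (curve_sum_opp N a x (- u')).
      apply Rgt_not_eq, curve_sum_lt; [| exact Hx | lra].
      intros i Hi; specialize (Ha i Hi); cbv beta; lra. }
  destruct (Rtotal_order s s') as [H | [H | H]]; [exfalso | exact H | exfalso].
  - exact (Hlt _ _ H Heq).
  - exact (Hlt _ _ H (eq_sym Heq)).
Qed.

Lemma exp_term_eventually_lt b c eps :
  0 < b -> 0 < c -> 0 < eps -> exists T, forall s, s <= T -> c * exp (b * s) < eps.
Proof.
  intros Hb Hc Heps; exists ((ln (eps / c) - 1) / b); intros s Hs.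
  replace eps with (c * exp (ln (eps / c))) at 1
    by (rewrite exp_ln; [field; lra | apply Rdiv_lt_0_compat; lra]).
  apply Rmult_lt_compat_l; [exact Hc |]; apply exp_increasing.
  apply (Rmult_le_compat_l b) in Hs; [| lra].
  replace (b * ((ln (eps / c) - 1) / b)) with (ln (eps / c) - 1) in Hs by (field; lra).
  lra.
Qed.

Lemma curve_sum_eventually_lt N a x eps :
  (forall i, (i <= N)%nat -> 0 < a i) -> pos_orthant N x -> 0 < eps ->
  exists T, forall s, s <= T -> curve_sum N a x s < eps.
Proof.
  revert eps; induction N as [| N IH]; intros eps Ha Hx Heps.
  - apply exp_term_eventually_lt; [apply Ha | apply Hx | ]; auto.
  - destruct (IH (eps / 2)) as [T1 H1]; [intros; apply Ha; lia | intros i Hi; apply Hx; lia | lra |].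
    destruct (exp_term_eventually_lt (a (S N)) (x (S N)) (eps / 2)) as [T2 H2];
      [apply Ha; lia | apply Hx; lia | lra |].
    exists (Rmin T1 T2); intros s Hs.
    specialize (H1 s (Rle_trans _ _ _ Hs (Rmin_l _ _))).
    specialize (H2 s (Rle_trans _ _ _ Hs (Rmin_r _ _))).
    unfold curve_sum, sumN in *; simpl; lra.
Qed.

Lemma curve_sum_linear_lower_bound N a x s :
  pos_orthant N x -> sumN N x + s * sumN N (fun i => x i * a i) <= curve_sum N a x s.
Proof.
  intros Hx; unfold curve_sum, sumN; rewrite scal_sum, <- plus_sum.
  apply sum_Rle; intros i Hi.
  assert (H := exp_ineq1_le (a i * s)); specialize (Hx i Hi); nra.
Qed.

Lemma curve_sum_hits_one N a x :
  same_strict_sign N a -> pos_orthant N x -> exists t, curve_sum N a x t = 1.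
Proof.
  assert (Hpos : forall a, (forall i, (i <= N)%nat -> 0 < a i) -> pos_orthant N x ->
            exists t, curve_sum N a x t = 1).
  { clear a; intros a Ha Hx.
    destruct (curve_sum_eventually_lt N a x 1 Ha Hx) as [T HT]; [lra |].
    set (B := sumN N (fun i => x i * a i)).
    assert (HB : 0 < B) by (apply tech1; intros i Hi; apply Rmult_lt_0_compat; auto).
    assert (HX : 0 < sumN N x) by (apply tech1; exact Hx).
    assert (Hup : 1 <= curve_sum N a x (/ B)).
    { eapply Rle_trans, curve_sum_linear_lower_bound; [| exact Hx].
      fold B; rewrite Rinv_l by lra; lra. }
    assert (Hlo := HT T (Rle_refl T)).
    destruct (IVT_gen (curve_sum N a x) T (/ B) 1) as [t [_ Ht]].
    - intros s; apply continuity_pt_curve_sum.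
    - split; [apply Rlt_le, (Rle_lt_trans _ _ _ (Rmin_l _ _) Hlo) |].
      exact (Rle_trans _ _ _ Hup (Rmax_r _ _)).
    - exists t; exact Ht. }
  intros [Ha | Ha] Hx; [apply Hpos; assumption |].
  destruct (Hpos (fun i => - a i)) as [t Ht]; [| exact Hx |].
  { intros i Hi; specialize (Ha i Hi); cbv beta; lra. }
  exists (- t); rewrite <- curve_sum_opp; exact Ht.
Qed.

Lemma t_a_spec N a x :
  same_strict_sign N a -> pos_orthant N x -> curve_sum N a x (t_a N a x) = 1.
Proof.
  intros Hs Hx; apply (epsilon_spec (inhabits 0) (fun t => curve_sum N a x t = 1)).
  apply curve_sum_hits_one; assumption.
Qed.

Lemma t_a_unique N a x t :
  same_strict_sign N a -> pos_orthant N x -> curve_sum N a x t = 1 -> t_a N a x = t.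
Proof.
  intros Hs Hx Ht; apply (curve_sum_inj N a x); [exact Hs | exact Hx |].
  rewrite Ht; apply t_a_spec; assumption.
Qed.

Lemma t_a_opp N a x :
  same_strict_sign N a -> pos_orthant N x -> t_a N (fun i => - a i) x = - t_a N a x.
Proof.
  intros Hs Hx; apply t_a_unique; [| exact Hx |].
  - destruct Hs as [Ha | Ha]; [right | left]; intros i Hi; specialize (Ha i Hi); lra.
  - rewrite curve_sum_opp, Ropp_involutive; apply t_a_spec; assumption.
Qed.

Lemma C_a_simplex N a x :
  same_strict_sign N a -> pos_orthant N x -> simplex0 N (C_a N a x).
Proof.
  intros Hs Hx; split; [| apply t_a_spec; assumption].
  intros i Hi; apply Rmult_lt_0_compat; [apply Hx, Hi | apply exp_pos].
Qed.

Lemma C_a_shift N a x c :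
  same_strict_sign N a -> pos_orthant N x ->
  C_a N a (fun i => x i * exp (a i * c)) = C_a N a x.
Proof.
  intros Hs Hx; apply functional_extensionality; intros i; unfold C_a.
  rewrite (t_a_unique N a _ (t_a N a x - c) Hs).
  - rewrite Rmult_assoc, <- exp_plus; do 2 f_equal; ring.
  - intros j Hj; apply Rmult_lt_0_compat; [apply Hx, Hj | apply exp_pos].
  - rewrite <- (t_a_spec N a x Hs Hx); apply sum_eq; intros j _.
    rewrite Rmult_assoc, <- exp_plus; do 2 f_equal; ring.
Qed.

Lemma e_a_pos N a i : 0 < e_a N a i.
Proof. unfold e_a, C_a; rewrite Rmult_1_l; apply exp_pos. Qed.

Lemma implicit_continuity (F : R -> R -> R) (sigma : R -> R) c t0 :
  (forall t s s', s < s' -> F t s < F t s') ->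
  (forall s, continuity_pt (fun t => F t s) t0) ->
  (forall t, F t (sigma t) = c) -> continuity_pt sigma t0.
Proof.
  intros Hmono Hcont Hsol; apply continuity_pt_locally; intros eps.
  assert (Hle : forall t s s', s <= s' -> F t s <= F t s').
  { intros t s s' [H | ->]; [apply Rlt_le, Hmono, H | apply Rle_refl]. }
  pose proof (cond_pos eps) as Heps.
  set (s0 := sigma t0).
  assert (Hup : c < F t0 (s0 + eps)) by (rewrite <- (Hsol t0); apply Hmono; unfold s0; lra).
  assert (Hlo : F t0 (s0 - eps) < c) by (rewrite <- (Hsol t0); apply Hmono; unfold s0; lra).
  assert (Nup := proj1 (continuity_pt_locally _ _) (Hcont (s0 + eps))
                  (mkposreal _ (proj2 (Rlt_0_minus _ _) Hup))).
  assert (Nlo := proj1 (continuity_pt_locally _ _) (Hcont (s0 - eps))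
                  (mkposreal _ (proj2 (Rlt_0_minus _ _) Hlo))).
  eapply filter_imp; [| exact (filter_and _ _ Nup Nlo)].
  intros u [Hu Hl]; simpl in Hu, Hl.
  apply Rabs_def2 in Hu; apply Rabs_def2 in Hl; apply Rabs_def1.
  - destruct (Rlt_or_le (sigma u) (s0 + eps)) as [H | H]; [lra |].
    apply (Hle u) in H; rewrite Hsol in H; lra.
  - destruct (Rlt_or_le (s0 - eps) (sigma u)) as [H | H]; [lra |].
    apply (Hle u) in H; rewrite Hsol in H; lra.
Qed.

Definition curve_sum_slope N (a x : nat -> R) (s0 s : R) : R :=
  sumN N (fun i => x i * (a i * exp (a i * s0) * slope exp 0 1 (a i * (s - s0)))).

Lemma curve_sum_sub N a x s0 s :
  curve_sum N a x s - curve_sum N a x s0 = (s - s0) * curve_sum_slope N a x s0 s.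
Proof.
  unfold curve_sum, curve_sum_slope, sumN; rewrite <- minus_sum, scal_sum.
  apply sum_eq; intros i _.
  transitivity (x i * (exp (a i * s) - exp (a i * s0))); [ring |].
  rewrite exp_sub_factor; ring.
Qed.

Lemma curve_sum_slope_pos N a x s0 s :
  (forall i, (i <= N)%nat -> 0 < a i) -> pos_orthant N x -> 0 < curve_sum_slope N a x s0 s.
Proof.
  intros Ha Hx; apply tech1; intros i Hi.
  apply Rmult_lt_0_compat; [apply Hx, Hi |].
  apply Rmult_lt_0_compat; [| apply slope_exp_pos].
  apply Rmult_lt_0_compat; [apply Ha, Hi | apply exp_pos].
Qed.

Lemma is_derive_curve_sum_exp N a w s t :
  is_derive (fun t => curve_sum N a (fun i => exp (w i * t)) s) t
    (sumN N (fun i => exp (a i * s) * (w i * exp (w i * t)))).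
Proof.
  apply (is_derive_ext (curve_sum N w (fun i => exp (a i * s)))); [| apply is_derive_curve_sum].
  intros u; apply sum_eq; intros i _; apply Rmult_comm.
Qed.

Lemma continuity_pt_t_a_exp_pos N a w t0 :
  (forall i, (i <= N)%nat -> 0 < a i) ->
  continuity_pt (fun t => t_a N a (fun i => exp (w i * t))) t0.
Proof.
  intros Ha.
  apply (implicit_continuity (fun t s => curve_sum N a (fun i => exp (w i * t)) s) _ 1).
  - intros t s s' Hss'; apply curve_sum_lt; [exact Ha | intros i _; apply exp_pos | exact Hss'].
  - intros s; eapply is_derive_continuity_pt, is_derive_curve_sum_exp.
  - intros t; apply t_a_spec; [left; exact Ha | intros i _; apply exp_pos].
Qed.

(* Implicit differentiation of [curve_sum N a (x t) (sigma t) = 1]: the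
   increment of [sigma] is the increment of [t |-> curve_sum N a (x t) s0]
   divided by a secant slope in the second variable, which is continuous in [t]. *)
Lemma ex_derive_t_a_exp_pos N a w t0 :
  (forall i, (i <= N)%nat -> 0 < a i) ->
  ex_derive (fun t => t_a N a (fun i => exp (w i * t))) t0.
Proof.
  intros Ha.
  set (x := fun t i => exp (w i * t)).
  set (sigma := fun t => t_a N a (x t)).
  assert (Hsol : forall t, curve_sum N a (x t) (sigma t) = 1)
    by (intros t; apply t_a_spec; [left; exact Ha | intros i _; apply exp_pos]).
  set (s0 := sigma t0).
  set (k := fun t => curve_sum_slope N a (x t) s0 (sigma t)).
  assert (Hk_cont : continuity_pt k t0).
  { apply continuity_pt_sum_f_R0; intros i _.
    apply continuity_pt_mult; [eapply is_derive_continuity_pt; unfold x; auto_derive; auto |].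
    apply continuity_pt_mult; [apply continuity_pt_const; intros ? ?; reflexivity |].
    apply (continuity_pt_comp (fun t => a i * (sigma t - s0))).
    - apply continuity_pt_mult; [apply continuity_pt_const; intros ? ?; reflexivity |].
      apply continuity_pt_minus; [apply continuity_pt_t_a_exp_pos, Ha |].
      apply continuity_pt_const; intros ? ?; reflexivity.
    - unfold s0; rewrite Rminus_diag, Rmult_0_r.
      apply slope_continuous; rewrite <- exp_0 at 1; apply is_derive_exp. }
  set (n := fun t => - curve_sum N a (x t) s0).
  assert (Hn : is_derive n t0 (- sumN N (fun i => exp (a i * s0) * (w i * exp (w i * t0)))))
    by (apply (is_derive_opp (fun t => curve_sum N a (x t) s0)), is_derive_curve_sum_exp).
  eexists; eapply (is_derive_increment_ratio sigma n k t0); [| | exact Hn | exact Hk_cont].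
  - intros t; fold s0; unfold n, k; rewrite <- curve_sum_sub, (Hsol t).
    assert (Hsol0 := Hsol t0); fold s0 in Hsol0; lra.
  - intros t; apply Rgt_not_eq, curve_sum_slope_pos; [exact Ha | intros i _; apply exp_pos].
Qed.

Lemma ex_derive_t_a_exp N a w t0 :
  same_strict_sign N a -> ex_derive (fun t => t_a N a (fun i => exp (w i * t))) t0.
Proof.
  intros [Ha | Ha]; [apply ex_derive_t_a_exp_pos; exact Ha |].
  apply (ex_derive_ext (fun t => - t_a N (fun i => - a i) (fun i => exp (w i * t)))).
  - intros t; rewrite t_a_opp; [apply Ropp_involutive | right; exact Ha |].
    intros i _; apply exp_pos.
  - apply (ex_derive_opp (fun t => t_a N (fun i => - a i) (fun i => exp (w i * t)))).
    apply ex_derive_t_a_exp_pos; intros i Hi; specialize (Ha i Hi); cbv beta; lra.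
Qed.

(** * The subgroups [t |-> C_a (exp (t w))] *)

(* The image in the simplex of the one-parameter subgroup [t |-> exp (t w)]
   of the orthant. *)
Definition exp_path N a (w : nat -> R) (t : R) : nat -> R :=
  C_a N a (fun i => exp (w i * t)).

Lemma exp_path_0 N a w : exp_path N a w 0 = e_a N a.
Proof.
  unfold exp_path, e_a; f_equal; apply functional_extensionality; intros i.
  rewrite Rmult_0_r; apply exp_0.
Qed.

Lemma exp_path_add N a w s t :
  same_strict_sign N a ->
  exp_path N a w (s + t) = opC N a (exp_path N a w s) (exp_path N a w t).
Proof.
  intros Hs; unfold exp_path, opC.
  rewrite <- (C_a_shift N a (fun i => exp (w i * (s + t)))
                (t_a N a (fun i => exp (w i * s)) + t_a N a (fun i => exp (w i * t)))) by
    (auto; intros i _; apply exp_pos).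
  f_equal; apply functional_extensionality; intros i; unfold C_a.
  rewrite <- !exp_plus; f_equal; ring.
Qed.

Lemma exp_path_one_param_subgroup N a w :
  same_strict_sign N a -> one_param_subgroup N a (exp_path N a w).
Proof.
  intros Hs; split; [| split; [| split]].
  - intros t; apply C_a_simplex; [exact Hs | intros i _; apply exp_pos].
  - intros i _; rewrite exp_path_0; reflexivity.
  - intros s t i _; rewrite exp_path_add by exact Hs; reflexivity.
  - intros t i _; unfold exp_path, C_a.
    set (sigma := fun u => t_a N a (fun j => exp (w j * u))).
    apply (ex_derive_mult (fun u => exp (w i * u)) (fun u => exp (a i * sigma u))).
    + auto_derive; exact I.
    + apply (ex_derive_comp exp (fun u => a i * sigma u)); [auto_derive; exact I |].
      apply (ex_derive_scal sigma), ex_derive_t_a_exp, Hs.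
Qed.

Lemma exp_path_ln_1 N a l i :
  same_strict_sign N a -> simplex0 N l -> (i <= N)%nat ->
  exp_path N a (fun j => ln (l j)) 1 i = l i.
Proof.
  intros Hs [Hl Hsum] Hi; unfold exp_path, C_a.
  rewrite (t_a_unique N a _ 0 Hs); [| intros j _; apply exp_pos |].
  - rewrite Rmult_1_r, Rmult_0_r, exp_0, Rmult_1_r; apply exp_ln, Hl, Hi.
  - transitivity (sumN N l); [apply sum_eq; intros j Hj | exact Hsum].
    rewrite Rmult_1_r, Rmult_0_r, exp_0, Rmult_1_r; apply exp_ln, Hl, Hj.
Qed.

(** * Logarithmic coordinates on the simplex *)

(* [Log_formula N a l m] unfolds to [e_a N a m * log_coord N a l m]. *)
Definition log_coord N (a x : nat -> R) (m : nat) : R :=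
  ln (x m) - a m / sumN N (fun k => a k * e_a N a k) * sumN N (fun j => e_a N a j * ln (x j)).

Section LogCoordinates.

Variables (N : nat) (a : nat -> R).
Hypothesis Hs : same_strict_sign N a.

Lemma weighted_rate_neq0 : sumN N (fun k => a k * e_a N a k) <> 0.
Proof. apply sum_mul_same_sign_neq0; [exact Hs | intros; apply e_a_pos]. Qed.

Lemma log_coord_ext x y m :
  (forall j, (j <= N)%nat -> x j = y j) -> (m <= N)%nat -> log_coord N a x m = log_coord N a y m.
Proof.
  intros Hxy Hm; unfold log_coord; rewrite Hxy by exact Hm.
  do 2 f_equal; apply sum_eq; intros j Hj; rewrite Hxy by exact Hj; reflexivity.
Qed.

Lemma log_coord_mul x y m :
  pos_orthant N x -> pos_orthant N y -> (m <= N)%nat ->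
  log_coord N a (fun i => x i * y i) m = log_coord N a x m + log_coord N a y m.
Proof.
  intros Hx Hy Hm; unfold log_coord, sumN; cbv beta.
  rewrite ln_mult by auto.
  rewrite (sum_eq (fun j => e_a N a j * ln (x j * y j))
                  (fun j => e_a N a j * ln (x j) + e_a N a j * ln (y j)))
    by (intros j Hj; cbv beta; rewrite ln_mult by auto; ring).
  rewrite plus_sum; ring.
Qed.

Lemma log_coord_shift x c m :
  pos_orthant N x -> (m <= N)%nat ->
  log_coord N a (fun i => x i * exp (a i * c)) m = log_coord N a x m.
Proof.
  intros Hx Hm; rewrite log_coord_mul by (auto; intros i _; apply exp_pos).
  enough (log_coord N a (fun i => exp (a i * c)) m = 0) by lra.
  unfold log_coord, sumN; rewrite ln_exp.
  rewrite (sum_eq (fun j => e_a N a j * ln (exp (a j * c))) (fun j => (a j * e_a N a j) * c))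
    by (intros j _; rewrite ln_exp; ring).
  rewrite <- scal_sum; field; exact weighted_rate_neq0.
Qed.

Lemma log_coord_opC l mu m :
  simplex0 N l -> simplex0 N mu -> (m <= N)%nat ->
  log_coord N a (opC N a l mu) m = log_coord N a l m + log_coord N a mu m.
Proof.
  intros [Hl _] [Hmu _] Hm; unfold opC, C_a.
  rewrite log_coord_shift, log_coord_mul by (auto; intros i Hi; apply Rmult_lt_0_compat; auto).
  reflexivity.
Qed.

Lemma log_coord_inj l mu :
  simplex0 N l -> simplex0 N mu ->
  (forall m, (m <= N)%nat -> log_coord N a l m = log_coord N a mu m) ->
  forall m, (m <= N)%nat -> l m = mu m.
Proof.
  intros [Hl Hl1] [Hmu Hmu1] Heq.
  set (A := sumN N (fun k => a k * e_a N a k)).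
  set (c := (sumN N (fun j => e_a N a j * ln (l j)) - sumN N (fun j => e_a N a j * ln (mu j))) / A).
  assert (Hlmu : forall m, (m <= N)%nat -> l m = mu m * exp (a m * c)).
  { intros m Hm; specialize (Heq m Hm); unfold log_coord in Heq; fold A in Heq.
    rewrite <- (exp_ln (l m)), <- (exp_ln (mu m)), <- exp_plus by auto; f_equal.
    unfold c; replace (a m * ((sumN N (fun j => e_a N a j * ln (l j)) -
                               sumN N (fun j => e_a N a j * ln (mu j))) / A))
      with (a m / A * sumN N (fun j => e_a N a j * ln (l j)) -
            a m / A * sumN N (fun j => e_a N a j * ln (mu j))) by (field; exact weighted_rate_neq0).
    lra. }
  assert (Hc : c = 0).
  { apply (curve_sum_inj N a mu); [exact Hs | exact Hmu |].
    transitivity 1.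
    - rewrite <- Hl1; apply sum_eq; intros j Hj; symmetry; apply Hlmu, Hj.
    - rewrite <- Hmu1; apply sum_eq; intros j _; rewrite Rmult_0_r, exp_0; ring. }
  intros m Hm; rewrite Hlmu, Hc, Rmult_0_r, exp_0 by exact Hm; ring.
Qed.

Lemma is_derive_log_coord (x : R -> nat -> R) (dx : nat -> R) t0 m :
  (forall j, (j <= N)%nat -> is_derive (fun t => x t j) t0 (dx j)) ->
  (forall j, (j <= N)%nat -> 0 < x t0 j) -> (m <= N)%nat ->
  is_derive (fun t => log_coord N a (x t) m) t0
    (dx m / x t0 m - a m / sumN N (fun k => a k * e_a N a k) *
                     sumN N (fun j => e_a N a j * (dx j / x t0 j))).
Proof.
  intros Hd Hx Hm; unfold log_coord.
  assert (Hln : forall j, (j <= N)%nat -> is_derive (fun t => ln (x t j)) t0 (dx j / x t0 j)).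
  { intros j Hj; apply (is_derive_comp ln (fun t => x t j));
      [apply is_derive_ln, Hx, Hj | apply Hd, Hj]. }
  apply (is_derive_minus (fun t => ln (x t m))); [apply Hln, Hm |].
  apply is_derive_scal, (is_derive_sum_f_R0 (fun j t => e_a N a j * ln (x t j))).
  intros j Hj; apply is_derive_scal, Hln, Hj.
Qed.

End LogCoordinates.

(** * One-parameter subgroups *)

Lemma velocity_tangent N (g : R -> nat -> R) xi :
  (forall t, simplex0 N (g t)) -> init_velocity N g xi -> tangent0 N xi.
Proof.
  intros Hsimp Hvel; unfold tangent0.
  assert (Hsum : is_derive (fun t => sumN N (g t)) 0 (sumN N xi))
    by (apply (is_derive_sum_f_R0 (fun j t => g t j)); exact Hvel).
  assert (Hone : is_derive (fun t => sumN N (g t)) 0 0).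
  { apply (is_derive_ext (fun _ => 1)); [intros t; symmetry; apply Hsimp |].
    apply (is_derive_const (K := R_AbsRing) 1). }
  rewrite <- (is_derive_unique _ _ _ Hsum); apply is_derive_unique, Hone.
Qed.

Lemma subgroup_log_coord_at_1 N a g xi m :
  same_strict_sign N a -> one_param_subgroup N a g -> init_velocity N g xi -> (m <= N)%nat ->
  log_coord N a (g 1) m = xi m / e_a N a m.
Proof.
  intros Hs [Hsimp [H0 [Hadd _]]] Hvel Hm.
  set (phi := fun t => log_coord N a (g t) m).
  assert (Hphi_add : forall s t, phi (s + t) = phi s + phi t).
  { intros s t; unfold phi.
    rewrite (log_coord_ext N a _ (opC N a (g s) (g t))) by auto.
    apply log_coord_opC; auto. }
  assert (Hphi_d : is_derive phi 0 (xi m / e_a N a m)).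
  { replace (xi m / e_a N a m) with
      (xi m / g 0 m - a m / sumN N (fun k => a k * e_a N a k) *
                      sumN N (fun j => e_a N a j * (xi j / g 0 j))).
    - apply is_derive_log_coord; auto; intros j Hj; apply Hsimp, Hj.
    - assert (Htan := velocity_tangent N g xi Hsimp Hvel); unfold tangent0, sumN in *.
      rewrite (sum_eq (fun j => e_a N a j * (xi j / g 0 j)) xi), Htan, H0; [ring | exact Hm |].
      intros j Hj; rewrite H0 by exact Hj; field; apply Rgt_not_eq, e_a_pos. }
  unfold phi in *; rewrite (additive_derive_linear _ _ Hphi_add Hphi_d 1); ring.
Qed.

Theorem theorem1 (N : nat) (a : nat -> R) :
  (1 <= N)%nat -> same_strict_sign N a ->
  forall l : nat -> R, simplex0 N l ->
    tangent0 N (Log_formula N a l) /\ Exp_is N a (Log_formula N a l) l.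
Proof.
  intros _ Hs l Hl.
  set (xi := Log_formula N a l).
  assert (Hxi : forall m, xi m / e_a N a m = log_coord N a l m)
    by (intros m; unfold xi, Log_formula, log_coord; field;
        split; [apply weighted_rate_neq0, Hs | apply Rgt_not_eq, e_a_pos]).
  set (g := exp_path N a (fun j => ln (l j))).
  assert (Hg : one_param_subgroup N a g) by (apply exp_path_one_param_subgroup, Hs).
  assert (Hg1 : forall i, (i <= N)%nat -> g 1 i = l i) by (intros; apply exp_path_ln_1; auto).
  assert (Hvel : init_velocity N g xi).
  { intros i Hi.
    assert (Hd : init_velocity N g (fun j => Derive (fun t => g t j) 0))
      by (intros j Hj; apply Derive_correct, (proj2 (proj2 (proj2 Hg))), Hj).
    assert (E := subgroup_log_coord_at_1 N a g _ i Hs Hg Hd Hi).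
    rewrite (log_coord_ext N a (g 1) l i Hg1 Hi) in E.
    replace (xi i) with (Derive (fun t => g t i) 0); [apply Hd, Hi |].
    unfold xi; change (Log_formula N a l i) with (e_a N a i * log_coord N a l i).
    rewrite E; field; apply Rgt_not_eq, e_a_pos. }
  split; [exact (velocity_tangent N g xi (proj1 Hg) Hvel) |].
  split; [exists g; auto |].
  intros g' Hg' Hvel'; apply (log_coord_inj N a Hs); [apply Hg' | exact Hl |].
  intros m Hm; rewrite (subgroup_log_coord_at_1 N a g' xi m Hs Hg' Hvel' Hm); apply Hxi.
Qed.
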